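(* In the setting of the context, let $\lambda_2$ be the second largest singular value (counted with multiplicity) of $\mathcal B$. Then $$\lambda_2=\max\{\|\Im(B^*u)\|:\ u\in\mathbb C^n,\ \langle iu,x_0\rangle=0,\ \|u\|=1\}=\max\{\|\mathcal B^\top u\|:\ u\in\mathbb R^{2n},\ u\perp G(x_0),\ \|u\|=1\}.$$
   Context: $A^*\in\mathbb C^{N\times n}$ is isometric ($AA^*=I_n$), $N\ge2n$, $x_0\in\mathbb C^n$ with $\|x_0\|=1$, $B=A\,\mathrm{diag}\big(\frac{A^*x_0}{|A^*x_0|}\big)$ (componentwise quotient, convention $y(j)/|y(j)|=1$ if $y(j)=0$), $\mathcal B=\begin{bmatrix}\Re B\\ \Im B\end{bmatrix}\in\mathbb R^{2n\times N}$. $G(v):=\begin{bmatrix}\Re v\\ \Im v\end{bmatrix}$. The real inner product on $\mathbb C^n$ is $\langle u,v\rangle=\Re(u^*v)$; on $\mathbb R^{2n}$, $\perp$ means orthogonal for the dot product. *)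

From HB Require Import structures.
From mathcomp Require Import all_boot all_order all_algebra.
Set Implicit Arguments. Unset Strict Implicit. Unset Printing Implicit Defensive.
Import Order.TTheory GRing.Theory Num.Theory.
Local Open Scope ring_scope.

Section Defs.
Variable C : numClosedFieldType.

Definition vnorm m (v : 'cV[C]_m) : C := sqrtC (\sum_i `|v i 0| ^+ 2).

Definition adj m k (M : 'M[C]_(m, k)) : 'M[C]_(k, m) := map_mx Num.conj M^T.

Definition rdot m (u v : 'cV[C]_m) : C := 'Re ((adj u *m v) 0 0).

Definition phase (y : C) : C := if y == 0 then 1 else y / `|y|.

Definition Bmat n N (A : 'M[C]_(n, N)) (x0 : 'cV[C]_n) : 'M[C]_(n, N) :=
  A *m diag_mx (\row_j phase ((adj A *m x0) j 0)).

Definition Re_mx m k (M : 'M[C]_(m, k)) : 'M[C]_(m, k) := map_mx (fun z => 'Re z) M.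
Definition Im_mx m k (M : 'M[C]_(m, k)) : 'M[C]_(m, k) := map_mx (fun z => 'Im z) M.

Definition realify n k (B : 'M[C]_(n, k)) : 'M[C]_(n + n, k) := col_mx (Re_mx B) (Im_mx B).

Definition Gvec n (v : 'cV[C]_n) : 'cV[C]_(n + n) := realify v.

Definition sorted_eigenvalues m (M : 'M[C]_m) (s : seq C) : Prop :=
  char_poly M = \prod_(x <- s) ('X - x%:P) /\
  all (fun x => x \is Num.real) s /\
  sorted (fun a b => b <= a) s.

(* singular values of a real matrix M (m x k, m <= k), counted with
   multiplicity, in nonincreasing order: square roots of the sorted
   eigenvalues s of M M^T. *)
Definition singular_values (s : seq C) : seq C := map sqrtC s.

End Defs.

From HB Require Import structures.
From mathcomp Require Import all_boot all_order all_algebra.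
Import Order.TTheory GRing.Theory Num.Theory.
Local Open Scope ring_scope.
Set Implicit Arguments. Unset Strict Implicit. Unset Printing Implicit Defensive.

(* Let M := cB cB^T, a real symmetric matrix.  For a real vector u = G(v) one
   has cB^T u = Re(B^* v), so u^T M u = |Re(B^* v)|^2 <= |B^* v|^2 = |u|^2
   since B is a co-isometry; and the phases make B^* x0 = |A^* x0| real, so
   M G(x0) = G(x0).  Hence 1 is the top eigenvalue of M with eigenvector
   G(x0), and by the spectral theorem the second eigenvalue is the maximum of
   the Rayleigh quotient of M on G(x0)^perp, attained at a real eigenvector.
   The complex form follows from Im(B^* u) = cB^T G(-iu) and
   <iu, x0> = - G(-iu) . G(x0). *)

Section Adjoint.
Variable C : numClosedFieldType.

Definition sqnorm m (v : 'cV[C]_m) : C := \sum_i `|v i 0| ^+ 2.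

Lemma sqnorm_ge0 m (v : 'cV[C]_m) : 0 <= sqnorm v.
Proof. by apply: sumr_ge0 => i _; rewrite exprn_ge0. Qed.

Lemma vnorm_eq1 m (v : 'cV[C]_m) : (vnorm v = 1) <-> (sqnorm v = 1).
Proof.
split => [h|h]; last by rewrite /vnorm -/(sqnorm v) h sqrtC1.
by rewrite -[sqnorm v]sqrtCK -/(vnorm v) h expr1n.
Qed.

Lemma sqnorm_eq0 m (v : 'cV[C]_m) : (sqnorm v == 0) = (v == 0).
Proof.
apply/idP/eqP => [|->]; last by rewrite /sqnorm big1 // => i _; rewrite mxE normr0 expr0n.
rewrite psumr_eq0 => [/allP v0|i _]; last exact: exprn_ge0.
apply/matrixP => i j; rewrite (ord1 j) mxE.
by have /= := v0 i (mem_index_enum i); rewrite sqrf_eq0 normr_eq0 => /eqP.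
Qed.

Lemma sqnorm_gt0 m (v : 'cV[C]_m) : v != 0 -> 0 < sqnorm v.
Proof. by move=> v0; rewrite lt_def sqnorm_ge0 sqnorm_eq0 v0. Qed.

Lemma sqnormZ m a (v : 'cV[C]_m) : sqnorm (a *: v) = `|a| ^+ 2 * sqnorm v.
Proof.
by rewrite /sqnorm mulr_sumr; apply: eq_bigr => i _; rewrite mxE normrM exprMn.
Qed.

Lemma sqnorm_normalize m (v : 'cV[C]_m) :
  v != 0 -> sqnorm ((sqrtC (sqnorm v))^-1 *: v) = 1.
Proof.
move=> v0; rewrite sqnormZ normfV ger0_norm ?sqrtC_ge0 ?sqnorm_ge0 //.
by rewrite exprVn sqrtCK mulVf // gt_eqF ?sqnorm_gt0.
Qed.

Lemma adj_mulmx_entry m (u v : 'cV[C]_m) :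
  (adj u *m v) 0 0 = \sum_k (u k 0)^* * v k 0.
Proof. by rewrite mxE; apply: eq_bigr => k _; rewrite !mxE. Qed.

Lemma adj_mulmx_self m (v : 'cV[C]_m) : (adj v *m v) 0 0 = sqnorm v.
Proof. by rewrite adj_mulmx_entry; apply: eq_bigr => i _; rewrite normCKC. Qed.

Lemma col_neq0_entry m (v : 'cV[C]_m) : v != 0 -> exists k, v k 0 != 0.
Proof.
move=> v0; apply/existsP; apply: contraNT v0 => /existsPn v0.
by apply/eqP/matrixP => i j; rewrite (ord1 j) mxE; apply/eqP; move: (v0 i); rewrite negbK.
Qed.

Lemma diag_mx_delta k (e : 'rV[C]_k) i :
  diag_mx e *m (delta_mx i 0 : 'cV[C]_k) = e 0 i *: delta_mx i 0.
Proof.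
apply/matrixP => a b; rewrite mul_diag_mx !mxE.
by case: eqP => [->|_]; rewrite ?mulr1 ?mulr0.
Qed.

Lemma delta_col_neq0 m (k : 'I_m) : (delta_mx k 0 : 'cV[C]_m) != 0.
Proof. by apply/eqP => /matrixP /(_ k 0); rewrite !mxE !eqxx => /eqP; rewrite oner_eq0. Qed.

Lemma tr_mulmx_sym m (u v : 'cV[C]_m) : (u^T *m v) 0 0 = (v^T *m u) 0 0.
Proof. by rewrite !mxE; apply: eq_bigr => i _; rewrite !mxE mulrC. Qed.

Lemma adjM m k p (X : 'M[C]_(m, k)) (Y : 'M[C]_(k, p)) :
  adj (X *m Y) = adj Y *m adj X.
Proof. by rewrite /adj trmx_mul map_mxM. Qed.

Lemma adjK m k (X : 'M[C]_(m, k)) : adj (adj X) = X.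
Proof. by apply/matrixP => i j; rewrite !mxE conjCK. Qed.

Lemma adjZ m k a (X : 'M[C]_(m, k)) : adj (a *: X) = a^* *: adj X.
Proof. by apply/matrixP => i j; rewrite !mxE rmorphM. Qed.

Lemma adj_diag_mx k (e : 'rV[C]_k) : adj (diag_mx e) = diag_mx (map_mx Num.conj e).
Proof.
apply/matrixP => i j; rewrite !mxE eq_sym.
by case: eqP => [->|_]; rewrite ?mulr1n ?mulr0n ?conjC0.
Qed.

Lemma sqnorm_coisometry m k (X : 'M[C]_(m, k)) (v : 'cV[C]_m) :
  X *m adj X = 1%:M -> sqnorm (adj X *m v) = sqnorm v.
Proof.
move=> XX; rewrite -!adj_mulmx_self adjM adjK mulmxA.
by rewrite -[adj v *m X *m _]mulmxA XX mulmx1.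
Qed.

Lemma rayleigh_eigenvector m (M : 'M[C]_m) (v : 'cV[C]_m) mu :
  M *m v = mu *: v -> (adj v *m M *m v) 0 0 = mu * sqnorm v.
Proof. by move=> Mv; rewrite -mulmxA Mv -scalemxAr mxE adj_mulmx_self. Qed.

Lemma char_poly_conj m (Q P D : 'M[C]_m) :
  Q *m P = 1%:M -> P *m Q = 1%:M -> char_poly (Q *m D *m P) = char_poly D.
Proof.
move=> QP PQ; rewrite /char_poly /char_poly_mx !map_mxM.
set q := map_mx _ Q; set p := map_mx _ P.
have qp : q *m p = 1%:M by rewrite -map_mxM QP map_mx1.
have pq : p *m q = 1%:M by rewrite -map_mxM PQ map_mx1.
have qXp : 'X%:M = q *m 'X%:M *m p :> 'M_m.
  by rewrite -mulmxA -scalar_mxC mulmxA qp mul1mx.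
by rewrite {1}qXp -mulmxBl -mulmxBr !det_mulmx mulrC mulrA -det_mulmx pq det1 mul1r.
Qed.

End Adjoint.

Section RealPart.
Variable C : numClosedFieldType.

Lemma mxOver_tr (S : {pred C}) m k (X : 'M[C]_(m, k)) :
  X \is a mxOver S -> X^T \is a mxOver S.
Proof. by move=> /mxOverP XS; apply/mxOverP => i j; rewrite mxE. Qed.

Lemma col_realmxP k (u : 'cV[C]_k) :
  reflect (forall i, u i 0 \is Num.real) (u \is a realmx).
Proof.
apply: (iffP mxOverP) => [u_real i|u_real i j]; first exact: u_real.
by rewrite (ord1 j); apply: u_real.
Qed.

Lemma adj_real m k (X : 'M[C]_(m, k)) : X \is a realmx -> adj X = X^T.
Proof. by move=> /mxOverP Xr; apply/matrixP => i j; rewrite !mxE conj_Creal. Qed.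

Lemma Re_mx_real m k (X : 'M[C]_(m, k)) : X \is a realmx -> Re_mx X = X.
Proof. by move=> /mxOverP Xr; apply/matrixP => i j; rewrite mxE; apply/Creal_ReP. Qed.

Lemma Re_mx_mxOver m k (X : 'M[C]_(m, k)) : Re_mx X \is a realmx.
Proof. by apply/mxOverP => i j; rewrite mxE Creal_Re. Qed.

Lemma Im_mx_mxOver m k (X : 'M[C]_(m, k)) : Im_mx X \is a realmx.
Proof. by apply/mxOverP => i j; rewrite mxE Creal_Im. Qed.

Lemma realify_mxOver m k (X : 'M[C]_(m, k)) : realify X \is a realmx.
Proof.
apply/mxOverP => i j; rewrite -[i]splitK; case: (split i) => a /=.
  by rewrite col_mxEu (mxOverP (Re_mx_mxOver X)).
by rewrite col_mxEd (mxOverP (Im_mx_mxOver X)).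
Qed.

Lemma Re_Im_mx m k (X : 'M[C]_(m, k)) : X = Re_mx X + 'i *: Im_mx X.
Proof. by apply/matrixP => i j; rewrite !mxE -Crect. Qed.

Section RealScalar.
Variable a : C.
Hypothesis a_real : a \is Num.real.

Lemma Re_mxZ m k (X : 'M[C]_(m, k)) : Re_mx (a *: X) = a *: Re_mx X.
Proof. by apply/matrixP => i j; rewrite !mxE; apply: ReMl. Qed.

Lemma Im_mxZ m k (X : 'M[C]_(m, k)) : Im_mx (a *: X) = a *: Im_mx X.
Proof. by apply/matrixP => i j; rewrite !mxE; apply: ImMl. Qed.

End RealScalar.

Section RealFactor.
Variables (m k p : nat) (X : 'M[C]_(m, k)) (Y : 'M[C]_(k, p)).

Lemma Re_mulmx_reall : X \is a realmx -> Re_mx (X *m Y) = X *m Re_mx Y.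
Proof.
move=> /mxOverP Xr; apply/matrixP => i j; rewrite !mxE raddf_sum.
by apply: eq_bigr => l _; rewrite !mxE; apply: ReMl; apply: Xr.
Qed.

Lemma Im_mulmx_reall : X \is a realmx -> Im_mx (X *m Y) = X *m Im_mx Y.
Proof.
move=> /mxOverP Xr; apply/matrixP => i j; rewrite !mxE raddf_sum.
by apply: eq_bigr => l _; rewrite !mxE; apply: ImMl; apply: Xr.
Qed.

Lemma Re_mulmx_realr : Y \is a realmx -> Re_mx (X *m Y) = Re_mx X *m Y.
Proof.
move=> /mxOverP Yr; apply/matrixP => i j; rewrite !mxE raddf_sum.
by apply: eq_bigr => l _; rewrite !mxE; apply: ReMr; apply: Yr.
Qed.

Lemma Im_mulmx_realr : Y \is a realmx -> Im_mx (X *m Y) = Im_mx X *m Y.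
Proof.
move=> /mxOverP Yr; apply/matrixP => i j; rewrite !mxE raddf_sum.
by apply: eq_bigr => l _; rewrite !mxE; apply: ImMr; apply: Yr.
Qed.

End RealFactor.

Lemma realify_mulmx_real m k (X : 'M[C]_(m, k)) (w : 'cV[C]_k) :
  w \is a realmx -> realify X *m w = Gvec (X *m w).
Proof.
by move=> wr; rewrite /Gvec /realify mul_col_mx Re_mulmx_realr // Im_mulmx_realr.
Qed.

(* [Re (z^* y) = Re z Re y + Im z Im y] entrywise. *)
Lemma tr_realify_mulmx_Gvec m k (X : 'M[C]_(m, k)) (v : 'cV[C]_m) :
  (realify X)^T *m Gvec v = Re_mx (adj X *m v).
Proof.
rewrite /Gvec /realify tr_col_mx mul_row_col.
apply/matrixP => i j; rewrite !mxE raddf_sum -big_split /=.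
by apply: eq_bigr => a _; rewrite !mxE ReM Re_conj Im_conj mulNr opprK.
Qed.

Lemma rdot_Gvec m (v w : 'cV[C]_m) : rdot v w = ((Gvec v)^T *m Gvec w) 0 0.
Proof. by rewrite /rdot {1}/Gvec tr_realify_mulmx_Gvec [RHS]mxE. Qed.

Lemma Gvec_mxOver m (v : 'cV[C]_m) : Gvec v \is a realmx.
Proof. exact: realify_mxOver. Qed.

Lemma rayleigh_gram m k (X : 'M[C]_(m, k)) (u : 'cV[C]_m) :
  X \is a realmx -> (adj u *m (X *m X^T) *m u) 0 0 = sqnorm (X^T *m u).
Proof.
by move=> X_real; rewrite -adj_mulmx_self adjM [adj X^T]adj_real ?trmxK ?mulmxA ?mxOver_tr.
Qed.

Lemma Im_mx_adj_mulmx m k (X : 'M[C]_(m, k)) (u : 'cV[C]_m) :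
  Im_mx (adj X *m u) = (realify X)^T *m Gvec (- 'i *: u).
Proof.
rewrite tr_realify_mulmx_Gvec -scalemxAr; apply/matrixP => i j.
by rewrite !mxE mulNr raddfN /= ReMil opprK.
Qed.

Lemma rdotNl m (v w : 'cV[C]_m) : rdot (- v) w = - rdot v w.
Proof. by rewrite /rdot -scaleN1r adjZ -scalemxAl mxE conjCN1 mulN1r raddfN. Qed.

Lemma sqnorm_col_mx m (v : 'cV[C]_(m + m)) :
  sqnorm v = sqnorm (usubmx v) + sqnorm (dsubmx v).
Proof.
rewrite /sqnorm big_split_ord /=.
by congr (_ + _); apply: eq_bigr => i _; rewrite mxE.
Qed.

Lemma sqnorm_Gvec m (v : 'cV[C]_m) : sqnorm (Gvec v) = sqnorm v.
Proof.
rewrite sqnorm_col_mx col_mxKu col_mxKd /sqnorm -big_split /=.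
apply: eq_bigr => i _; rewrite !mxE (normC_Re_Im (v i 0)) sqrtCK.
by rewrite !real_normK ?Creal_Re ?Creal_Im.
Qed.

Lemma Gvec_real m (u : 'cV[C]_(m + m)) : u \is a realmx ->
  u = Gvec (usubmx u + 'i *: dsubmx u).
Proof.
move=> /mxOverP ur; rewrite /Gvec /realify -[LHS]vsubmxK.
by congr col_mx; apply/matrixP => i j; rewrite !mxE ?Re_rect ?Im_rect.
Qed.

Lemma sqnorm_Re_mx_le m (z : 'cV[C]_m) : sqnorm (Re_mx z) <= sqnorm z.
Proof.
apply: ler_sum => i _; rewrite mxE real_normK ?Creal_Re //.
by rewrite (normC_Re_Im (z i 0)) sqrtCK lerDl -real_normK ?Creal_Im // exprn_ge0.
Qed.

Lemma real_eigenvector m (M : 'M[C]_m) (g w : 'cV[C]_m) mu :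
  M \is a realmx -> g \is a realmx -> mu \is Num.real -> w != 0 ->
  M *m w = mu *: w -> (adj g *m w) 0 0 = 0 ->
  exists r : 'cV[C]_m,
    [/\ r \is a realmx, r != 0, M *m r = mu *: r & (adj g *m r) 0 0 = 0].
Proof.
move=> M_real g_real mu_real w0 Mw gw.
have g'_real : adj g \is a realmx by rewrite adj_real // mxOver_tr.
have [Re0|ReN0] := eqVneq (Re_mx w) 0.
  exists (Im_mx w); split; first exact: Im_mx_mxOver.
  - by apply: contraNneq w0 => Im0; rewrite [w]Re_Im_mx Re0 Im0 scaler0 addr0.
  - by rewrite -Im_mulmx_reall // Mw Im_mxZ.
  - by rewrite -Im_mulmx_reall // mxE gw raddf0.
exists (Re_mx w); split => //; first exact: Re_mx_mxOver.
- by rewrite -Re_mulmx_reall // Mw Re_mxZ.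
- by rewrite -Re_mulmx_reall // mxE gw raddf0.
Qed.

End RealPart.

Section NonincreasingEnumeration.
Variables (R : numDomainType) (m : nat) (f : 'I_m -> R) (s : seq R).
Hypothesis s_perm : perm_eq s (map f (enum 'I_m)).
Hypothesis s_sorted : sorted (fun a b => b <= a) s.

Let ge_trans : transitive (fun a b : R => b <= a).
Proof. by move=> y x z xy yz; exact: le_trans yz xy. Qed.

Lemma mem_sorted_ge (x : R) t : sorted (fun a b => b <= a) (x :: t) ->
  forall y, y \in x :: t -> y <= x.
Proof.
move=> /(order_path_min ge_trans) /allP tx y; rewrite in_cons.
by case/orP => [/eqP -> //|]; apply: tx.
Qed.

Lemma nonincreasing_head_ge i : f i <= s`_0.
Proof.
have : f i \in s by rewrite (perm_mem s_perm) map_f ?mem_enum.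
by case: s s_sorted => [//|x t] xt; apply: mem_sorted_ge.
Qed.

Lemma nonincreasing_top2 : (1 < m)%N -> exists i0 i1,
  [/\ i1 != i0, f i0 = s`_0, f i1 = s`_1 & forall i, i != i0 -> f i <= s`_1].
Proof.
move=> m_gt1.
have s_size : size s = m by rewrite (perm_size s_perm) size_map size_enum_ord.
move: s_perm s_size s_sorted.
case: s => [|x0 [|x1 t]] /= p; try by move=> sz; rewrite -sz in m_gt1.
move=> _ /andP [_ xt].
have /mapP [i0 _ e0] : x0 \in map f (enum 'I_m) by rewrite -(perm_mem p) mem_head.
have p1 : perm_eq (x1 :: t) (map f (rem i0 (enum 'I_m))).
  rewrite -(perm_cons x0); apply: (perm_trans p); rewrite e0 -map_cons.
  by apply: perm_map; apply: perm_to_rem; rewrite mem_enum.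
have /mapP [i1] : x1 \in map f (rem i0 (enum 'I_m)).
  by rewrite -(perm_mem p1) mem_head.
rewrite (mem_rem_uniq _ (enum_uniq _)) inE => /andP [i10 _] e1.
exists i0, i1; split=> // i i_i0; apply: (mem_sorted_ge xt).
by rewrite (perm_mem p1) map_f // (mem_rem_uniq _ (enum_uniq _)) inE i_i0 mem_enum.
Qed.

End NonincreasingEnumeration.

Section HermitianSpectrum.
Variable C : numClosedFieldType.
Variables (m : nat) (M : 'M[C]_m).
Hypothesis M_herm : adj M = M.

Let P := spectralmx M.
Let dv := spectral_diag M.
Local Notation D := (diag_mx dv).
Local Notation d i := (dv 0 i).
Local Notation e k := (delta_mx k 0 : 'cV[C]_m).

Lemma spectral_mul_adj : P *m adj P = 1%:M.
Proof. exact/unitarymxP/spectral_unitarymx. Qed.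

Lemma adj_mul_spectral : adj P *m P = 1%:M.
Proof.
by have := mulVmx (spectral_unit M); rewrite invmx_unitary ?spectral_unitarymx.
Qed.

Let M_hermsym : M \is hermsymmx.
Proof. by rewrite is_hermitianmxE expr0 scale1r; apply/eqP; rewrite -[LHS]M_herm. Qed.

Lemma hermitian_spectral_decomposition : M = adj P *m D *m P.
Proof.
have /orthomx_spectralP := hermitian_normalmx M_hermsym.
by rewrite invmx_unitary ?spectral_unitarymx.
Qed.

Lemma hermitian_eigenvalue_real i : d i \is Num.real.
Proof. exact: (mxOverP (hermitian_spectral_diag_real M_hermsym)). Qed.

Lemma char_poly_hermitian : char_poly M = \prod_(i < m) ('X - (d i)%:P).
Proof.
rewrite {1}hermitian_spectral_decomposition.
rewrite char_poly_conj ?adj_mul_spectral ?spectral_mul_adj //.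
rewrite char_poly_trig ?diag_mx_is_trig //.
by apply: eq_bigr => i _; rewrite mxE eqxx mulr1n.
Qed.

Lemma sorted_eigenvalues_exist : exists s, sorted_eigenvalues M s.
Proof.
have ds_real : all (fun x => x \is Num.real) (map (fun i => d i) (enum 'I_m)).
  by apply/allP => x /mapP [i _ ->]; apply: hermitian_eigenvalue_real.
exists (sort (fun a b => b <= a) (map (fun i => d i) (enum 'I_m))); split; [|split].
- rewrite char_poly_hermitian (perm_big _ (permEl (perm_sort _ _))) big_map big_enum /=.
  by apply: eq_bigl => i; rewrite inE.
- by rewrite (perm_all _ (permEl (perm_sort _ _))).
- apply: (sort_sorted_in (P := fun x : C => x \is Num.real)) => // x y xr yr.
  by rewrite /total real_leVge.
Qed.

Lemma sorted_eigenvalues_perm s :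
  sorted_eigenvalues M s -> perm_eq s (map (fun i => d i) (enum 'I_m)).
Proof.
case=> chM _; apply: prod_XsubC_eq.
by rewrite -chM char_poly_hermitian big_map big_enum; apply: eq_bigl => i; rewrite inE.
Qed.

Lemma rayleigh_spectral (w : 'cV[C]_m) :
  (adj w *m M *m w) 0 0 = \sum_i d i * `|(P *m w) i 0| ^+ 2.
Proof.
rewrite hermitian_spectral_decomposition !mulmxA -mulmxA -[adj w *m adj P]adjM.
by rewrite mul_mx_diag mxE; apply: eq_bigr => i _; rewrite !mxE normCKC mulrCA mulrA.
Qed.

Lemma sqnorm_spectral (w : 'cV[C]_m) : sqnorm (P *m w) = sqnorm w.
Proof. by rewrite -{1}[P]adjK sqnorm_coisometry // adjK adj_mul_spectral. Qed.

Lemma spectral_mulmx_eq0 (w : 'cV[C]_m) : (P *m w == 0) = (w == 0).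
Proof. by rewrite -!sqnorm_eq0 sqnorm_spectral. Qed.

Lemma adj_spectral_mulmx_eq0 (y : 'cV[C]_m) : (adj P *m y == 0) = (y == 0).
Proof.
by rewrite -(spectral_mulmx_eq0 (adj P *m y)) mulmxA spectral_mul_adj mul1mx.
Qed.

Lemma eigenvector_spectral (y : 'cV[C]_m) mu :
  D *m y = mu *: y -> M *m (adj P *m y) = mu *: (adj P *m y).
Proof.
move=> Dy; rewrite hermitian_spectral_decomposition -!mulmxA [P *m _]mulmxA.
by rewrite spectral_mul_adj mul1mx Dy scalemxAr.
Qed.

Lemma spectral_eigenvector_support (w : 'cV[C]_m) mu i :
  M *m w = mu *: w -> (P *m w) i 0 != 0 -> d i = mu.
Proof.
move=> Mw wi; have := congr1 (mulmx P) Mw.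
rewrite {1}hermitian_spectral_decomposition !mulmxA spectral_mul_adj mul1mx -mulmxA.
rewrite -scalemxAr; move: wi; set pw := P *m w; clearbody pw => wi.
by move=> /matrixP /(_ i 0); rewrite mul_diag_mx !mxE; apply: mulIf.
Qed.

Lemma adj_spectral_mulmx (v w : 'cV[C]_m) : adj (P *m v) *m (P *m w) = adj v *m w.
Proof. by rewrite adjM !mulmxA -[adj v *m _ *m P]mulmxA adj_mul_spectral mulmx1. Qed.

Hypothesis M_real : M \is a realmx.

Lemma eigenvalue_le_rayleigh_bound lam :
  (forall u : 'cV[C]_m, u \is a realmx -> (adj u *m M *m u) 0 0 <= lam * sqnorm u) ->
  forall i, d i <= lam.
Proof.
move=> bound i.
have Mw : M *m (adj P *m e i) = d i *: (adj P *m e i).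
  by apply: eigenvector_spectral; rewrite diag_mx_delta.
have w0 : adj P *m e i != 0 by rewrite adj_spectral_mulmx_eq0 delta_col_neq0.
have ortho0 : (adj (0 : 'cV[C]_m) *m (adj P *m e i)) 0 0 = 0.
  by rewrite adj_mulmx_entry big1 // => k _; rewrite mxE conjC0 mul0r.
have [r [r_real r0 Mr _]] := real_eigenvector M_real (mxOver0 (rpred0 _))
  (hermitian_eigenvalue_real i) w0 Mw ortho0.
by have := bound r r_real; rewrite (rayleigh_eigenvector Mr) ler_pM2r ?sqnorm_gt0.
Qed.

Lemma top_eigenvalue s (g : 'cV[C]_m) lam :
  sorted_eigenvalues M s -> g != 0 -> M *m g = lam *: g -> (forall i, d i <= lam) ->
  s`_0 = lam.
Proof.
move=> hs g0 Mg le_lam; have s_perm := sorted_eigenvalues_perm hs.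
have [k gk] : exists k, (P *m g) k 0 != 0.
  by apply: col_neq0_entry; rewrite spectral_mulmx_eq0.
apply/le_anti/andP; split.
  have : s`_0 \in map (fun i => d i) (enum 'I_m).
    rewrite -(perm_mem s_perm) mem_nth // (perm_size s_perm) size_map size_enum_ord.
    exact: leq_ltn_trans (leq0n k) (ltn_ord k).
  by case/mapP => i _ ->.
by rewrite -(spectral_eigenvector_support Mg gk) (nonincreasing_head_ge s_perm hs.2.2).
Qed.

Section SecondEigenvalue.
Variables (s : seq C) (g : 'cV[C]_m).
Hypotheses (s_eig : sorted_eigenvalues M s) (m_gt1 : (1 < m)%N).
Hypotheses (g_neq0 : g != 0) (Mg : M *m g = s`_0 *: g).

Let top2 := nonincreasing_top2 (sorted_eigenvalues_perm s_eig) s_eig.2.2 m_gt1.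

Let s1_real : s`_1 \is Num.real.
Proof. by have [i0 [i1 [_ _ <- _]]] := top2; apply: hermitian_eigenvalue_real. Qed.

Lemma rayleigh_le_second (u : 'cV[C]_m) :
  (adj g *m u) 0 0 = 0 -> sqnorm u = 1 -> (adj u *m M *m u) 0 0 <= s`_1.
Proof.
move=> gu u1; have [i0 [i1 [_ di0 _ le_s1]]] := top2.
rewrite rayleigh_spectral; set y := P *m u; set h := P *m g.
suff : \sum_i d i * `|y i 0| ^+ 2 <= \sum_i s`_1 * `|y i 0| ^+ 2.
  by rewrite -mulr_sumr -/(sqnorm y) sqnorm_spectral u1 mulr1.
apply: ler_sum => i _; have [->|i_i0] := eqVneq i i0; last first.
  by rewrite ler_wpM2r ?exprn_ge0 ?le_s1.
have d0_real := hermitian_eigenvalue_real i0.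
have [d_le|s1_lt] := real_leP d0_real s1_real; first by rewrite ler_wpM2r ?exprn_ge0.
(* The top eigenvalue is now simple, so [P g] lives on the coordinate [i0],
   and [u] orthogonal to [g] means that coordinate of [y] vanishes. *)
have h_supp k : k != i0 -> h k 0 = 0.
  move=> k_i0; apply/eqP; apply: contraTT s1_lt => hk.
  by rewrite -real_leNgt // di0 -(spectral_eigenvector_support Mg hk) le_s1.
have [k hk] : exists k, h k 0 != 0.
  by apply: col_neq0_entry; rewrite spectral_mulmx_eq0.
have hi0 : h i0 0 != 0.
  by apply: contraNneq hk => h0; have [->|/h_supp->] := eqVneq k i0; rewrite ?h0.
have : (adj h *m y) 0 0 = 0 by rewrite adj_spectral_mulmx.
rewrite adj_mulmx_entry (bigD1 i0) //= big1 ?addr0 => [/eqP|j j_i0]; last first.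
  by rewrite h_supp // conjC0 mul0r.
by rewrite mulf_eq0 conjC_eq0 (negPf hi0) => /eqP ->; rewrite normr0 expr0n /= !mulr0.
Qed.

Lemma second_spectral_eigenvector (h : 'cV[C]_m) :
  (forall k, h k 0 != 0 -> d k = s`_0) ->
  exists y : 'cV[C]_m, [/\ D *m y = s`_1 *: y, y != 0 & (adj h *m y) 0 0 = 0].
Proof.
move=> h_supp; have [i0 [i1 [i10 di0 di1 _]]] := top2.
have ortho_delta k : adj h *m e k = (h k 0)^*%:M.
  apply/matrixP => i j; rewrite !ord1 [RHS]mxE adj_mulmx_entry (bigD1 k) //=.
  rewrite big1 => [|l lk]; first by rewrite !mxE !eqxx mulr1 addr0.
  by rewrite mxE (negPf lk) mulr0.
have [h1|h1] := eqVneq (h i1 0) 0.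
  by exists (e i1); rewrite diag_mx_delta di1 ortho_delta h1 conjC0 mxE delta_col_neq0.
(* Otherwise [s`_0 = s`_1] and we combine [e i0] and [e i1]. *)
have d1 : d i1 = s`_0 := h_supp i1 h1.
exists ((h i1 0)^* *: e i0 - (h i0 0)^* *: e i1); split.
- rewrite mulmxBr -!scalemxAr !diag_mx_delta di0 -di1 d1 scalerBr !scalerA.
  by rewrite ![_ * s`_0]mulrC.
- apply/eqP => /matrixP /(_ i0 0); rewrite !mxE !eqxx eq_sym (negPf i10) /=.
  by rewrite mulr1 mulr0 subr0 => /eqP; rewrite conjC_eq0 (negPf h1).
- by rewrite mulmxBr -!scalemxAr !ortho_delta !scale_scalar_mx mulrC subrr mxE.
Qed.

Hypothesis g_real : g \is a realmx.

Lemma rayleigh_second_attained : exists u : 'cV[C]_m,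
  [/\ u \is a realmx, (adj g *m u) 0 0 = 0, sqnorm u = 1 & (adj u *m M *m u) 0 0 = s`_1].
Proof.
have [y [Dy y0 hy]] :=
  second_spectral_eigenvector (fun k => spectral_eigenvector_support Mg).
have w0 : adj P *m y != 0 by rewrite adj_spectral_mulmx_eq0.
have gw : (adj g *m (adj P *m y)) 0 0 = 0 by rewrite mulmxA -adjM.
have [r [r_real r0 Mr gr]] :=
  real_eigenvector M_real g_real s1_real w0 (eigenvector_spectral Dy) gw.
set c := (sqrtC (sqnorm r))^-1.
have c_real : c \is Num.real by rewrite rpredV sqrtC_real // sqnorm_ge0.
exists (c *: r); split.
- exact: mxOverZ.
- by rewrite -scalemxAr mxE gr mulr0.
- exact: sqnorm_normalize.
- rewrite (rayleigh_eigenvector (mu := s`_1)) ?sqnorm_normalize ?mulr1 //.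
  by rewrite -scalemxAr Mr !scalerA mulrC.
Qed.

End SecondEigenvalue.

End HermitianSpectrum.

Section PhaseRetrieval.
Variable C : numClosedFieldType.

Lemma normr_phase (y : C) : `|phase y| = 1.
Proof.
rewrite /phase; case: eqP => [_|/eqP y0]; first by rewrite normr1.
by rewrite normrM normrV ?unitfE ?normr_eq0 // normr_id mulfV // normr_eq0.
Qed.

Lemma conj_phase_mul (y : C) : (phase y)^* * y = `|y|.
Proof.
rewrite /phase; case: eqP => [->|/eqP y0]; first by rewrite mulr0 normr0.
rewrite rmorphM fmorphV /= (conj_Creal (normr_real y)) mulrAC -normCKC expr2 mulfK //.
by rewrite normr_eq0.
Qed.

Variables (n N : nat) (A : 'M[C]_(n, N)) (x0 : 'cV[C]_n).
Hypothesis A_coiso : A *m adj A = 1%:M.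

Local Notation B := (Bmat A x0).
Local Notation cB := (realify (Bmat A x0)).
Local Notation Phase := (diag_mx (\row_j phase ((adj A *m x0) j 0))).

Lemma Bmat_coisometry : B *m adj B = 1%:M.
Proof.
have Phase_unitary : Phase *m adj Phase = 1%:M.
  apply/matrixP => i j; rewrite mul_diag_mx !mxE.
  case: eqP => [->|/eqP ne]; last by rewrite eq_sym (negPf ne) /= !mulr0n conjC0 mulr0.
  by rewrite eqxx !mulr1n -normCK normr_phase expr1n.
by rewrite /Bmat adjM mulmxA -[A *m Phase *m _]mulmxA Phase_unitary mulmx1 A_coiso.
Qed.

Lemma adj_Bmat_x0 : adj B *m x0 = \col_j `|(adj A *m x0) j 0|.
Proof.
rewrite /Bmat adjM -mulmxA adj_diag_mx mul_diag_mx.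
by apply/matrixP => i j; rewrite (ord1 j) !mxE -conj_phase_mul.
Qed.

Lemma gram_realify_real : cB *m cB^T \is a realmx.
Proof. by apply: mxOverM; [|apply: mxOver_tr]; apply: realify_mxOver. Qed.

Lemma gram_realify_herm : adj (cB *m cB^T) = cB *m cB^T.
Proof. by rewrite adjM !adj_real ?trmxK ?mxOver_tr ?realify_mxOver. Qed.

Lemma gram_realify_Gvec : cB *m cB^T *m Gvec x0 = Gvec x0.
Proof.
have Bx0_real : adj B *m x0 \is a realmx.
  by rewrite adj_Bmat_x0; apply/mxOverP => i j; rewrite mxE normr_real.
rewrite -mulmxA tr_realify_mulmx_Gvec Re_mx_real // realify_mulmx_real //.
by rewrite mulmxA Bmat_coisometry mul1mx.
Qed.

Lemma rayleigh_gram_realify_le (u : 'cV[C]_(n + n)) :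
  u \is a realmx -> (adj u *m (cB *m cB^T) *m u) 0 0 <= 1 * sqnorm u.
Proof.
move=> u_real; rewrite mul1r rayleigh_gram ?realify_mxOver //.
rewrite {1 2}(Gvec_real u_real) tr_realify_mulmx_Gvec sqnorm_Gvec.
by rewrite -[X in _ <= X](sqnorm_coisometry _ Bmat_coisometry) sqnorm_Re_mx_le.
Qed.

End PhaseRetrieval.

Section SecondSingularValue.
Variable C : numClosedFieldType.
Variables (n N : nat) (A : 'M[C]_(n, N)) (x0 : 'cV[C]_n).
Hypotheses (A_coiso : A *m adj A = 1%:M) (x0_unit : vnorm x0 = 1).

Local Notation B := (Bmat A x0).
Local Notation cB := (realify (Bmat A x0)).
Local Notation M := (cB *m cB^T).

Let M_herm := gram_realify_herm A x0.
Let M_real := gram_realify_real A x0.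

Lemma x0_neq0 : x0 != 0.
Proof. by rewrite -sqnorm_eq0 (vnorm_eq1 x0).1 // oner_eq0. Qed.

Lemma Gvec_x0_neq0 : Gvec x0 != 0.
Proof. by rewrite -sqnorm_eq0 sqnorm_Gvec sqnorm_eq0 x0_neq0. Qed.

Lemma realify_dim_gt1 : (1 < n + n)%N.
Proof.
have [k _] := col_neq0_entry x0_neq0.
have n_gt0 : (0 < n)%N := leq_ltn_trans (leq0n k) (ltn_ord k).
exact: (leq_add n_gt0 n_gt0).
Qed.

Lemma imaginary_max_of_real_max lam :
  (exists u : 'cV[C]_(n + n), (forall i, u i 0 \is Num.real) /\
       (u^T *m Gvec x0) 0 0 = 0 /\ vnorm u = 1 /\ vnorm (cB^T *m u) = lam) /\
  (forall u : 'cV[C]_(n + n), (forall i, u i 0 \is Num.real) ->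
       (u^T *m Gvec x0) 0 0 = 0 -> vnorm u = 1 -> vnorm (cB^T *m u) <= lam) ->
  (exists u : 'cV[C]_n, rdot ('i *: u) x0 = 0 /\ vnorm u = 1 /\
       vnorm (Im_mx (adj B *m u)) = lam) /\
  (forall u : 'cV[C]_n, rdot ('i *: u) x0 = 0 -> vnorm u = 1 ->
       vnorm (Im_mx (adj B *m u)) <= lam).
Proof.
case=> [[u [/col_realmxP u_real [ug [u1 uB]]]] le_lam].
have ortho v : rdot ('i *: v) x0 = - ((Gvec (- 'i *: v))^T *m Gvec x0) 0 0.
  by rewrite -rdot_Gvec -rdotNl scaleNr opprK.
have sqnorm_Gvec_i v : sqnorm (Gvec (- 'i *: v)) = sqnorm v.
  by rewrite sqnorm_Gvec sqnormZ normrN normCi expr1n mul1r.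
split.
  set v := usubmx u + 'i *: dsubmx u; have uv : u = Gvec v := Gvec_real u_real.
  have iiv : - 'i *: ('i *: v) = v by rewrite scalerA mulNr -expr2 sqrCi opprK scale1r.
  exists ('i *: v); rewrite Im_mx_adj_mulmx ortho iiv -uv ug oppr0; do !split => //.
  by apply/vnorm_eq1; rewrite -sqnorm_Gvec_i iiv -uv; apply/vnorm_eq1.
move=> w wx /vnorm_eq1 w1; rewrite Im_mx_adj_mulmx; apply: le_lam.
- by apply/col_realmxP/Gvec_mxOver.
- by apply/eqP; rewrite -oppr_eq0 -ortho wx.
- by apply/vnorm_eq1; rewrite sqnorm_Gvec_i.
Qed.

Variable s : seq C.
Hypothesis s_eig : sorted_eigenvalues M s.

Lemma gram_realify_top_eigenvalue : s`_0 = 1.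
Proof.
apply: (top_eigenvalue M_herm s_eig Gvec_x0_neq0).
  by rewrite scale1r gram_realify_Gvec.
exact: (eigenvalue_le_rayleigh_bound M_herm M_real (rayleigh_gram_realify_le x0 A_coiso)).
Qed.

Lemma second_singular_value_real :
  (exists u : 'cV[C]_(n + n), (forall i, u i 0 \is Num.real) /\
       (u^T *m Gvec x0) 0 0 = 0 /\ vnorm u = 1 /\
       vnorm (cB^T *m u) = sqrtC s`_1) /\
   (forall u : 'cV[C]_(n + n), (forall i, u i 0 \is Num.real) ->
       (u^T *m Gvec x0) 0 0 = 0 -> vnorm u = 1 ->
       vnorm (cB^T *m u) <= sqrtC s`_1).
Proof.
have Mg : M *m Gvec x0 = s`_0 *: Gvec x0.
  by rewrite gram_realify_top_eigenvalue scale1r gram_realify_Gvec.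
have vnorm_rayleigh (u : 'cV[C]_(n + n)) :
    vnorm (cB^T *m u) = sqrtC ((adj u *m M *m u) 0 0).
  by rewrite rayleigh_gram ?realify_mxOver.
have ortho_real (u : 'cV[C]_(n + n)) :
    u \is a realmx -> (u^T *m Gvec x0) 0 0 = (adj (Gvec x0) *m u) 0 0.
  by move=> u_real; rewrite adj_real ?Gvec_mxOver // tr_mulmx_sym.
have [u [/col_realmxP u_real gu u1 uM]] :=
  rayleigh_second_attained M_herm M_real s_eig realify_dim_gt1 Mg (Gvec_mxOver x0).
split.
  exists u; rewrite ortho_real ?vnorm_rayleigh ?uM; last exact/col_realmxP.
  by do !split=> //; apply/vnorm_eq1.
move=> w /col_realmxP w_real wg /vnorm_eq1 w1; rewrite vnorm_rayleigh ler_sqrtC ?nnegrE.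
- apply: (rayleigh_le_second M_herm s_eig realify_dim_gt1 Gvec_x0_neq0 Mg) => //.
  by rewrite -ortho_real.
- by rewrite rayleigh_gram ?sqnorm_ge0 ?realify_mxOver.
- by rewrite -uM rayleigh_gram ?sqnorm_ge0 ?realify_mxOver.
Qed.

End SecondSingularValue.

Unset Implicit Arguments.

Theorem mainTheorem7 (C : numClosedFieldType) (n N : nat)
    (A : 'M[C]_(n, N)) (x0 : 'cV[C]_n)
    (hN : (2 * n <= N)%N)
    (hA : A *m adj A = 1%:M)
    (hx0 : vnorm x0 = 1) :
  let B := Bmat A x0 in
  let cB := realify B in
  (exists s, sorted_eigenvalues (cB *m cB^T) s) /\
  forall s, sorted_eigenvalues (cB *m cB^T) s ->
  let lambda2 := (singular_values s)`_1 in
  ((exists u : 'cV[C]_n, rdot ('i *: u) x0 = 0 /\ vnorm u = 1 /\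
       vnorm (Im_mx (adj B *m u)) = lambda2) /\
   (forall u : 'cV[C]_n, rdot ('i *: u) x0 = 0 -> vnorm u = 1 ->
       vnorm (Im_mx (adj B *m u)) <= lambda2)) /\
  ((exists u : 'cV[C]_(n + n), (forall i, u i 0 \is Num.real) /\
       (u^T *m Gvec x0) 0 0 = 0 /\ vnorm u = 1 /\
       vnorm (cB^T *m u) = lambda2) /\
   (forall u : 'cV[C]_(n + n), (forall i, u i 0 \is Num.real) ->
       (u^T *m Gvec x0) 0 0 = 0 -> vnorm u = 1 ->
       vnorm (cB^T *m u) <= lambda2)).
Proof.
move=> B cB; have M_herm := gram_realify_herm A x0.
split; first exact: sorted_eigenvalues_exist M_herm.
move=> s s_eig lambda2.
have -> : lambda2 = sqrtC s`_1.
  have s_size : size s = (n + n)%N.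
    by rewrite (perm_size (sorted_eigenvalues_perm M_herm s_eig)) size_map size_enum_ord.
  by rewrite /lambda2 /singular_values (nth_map 0) // s_size (realify_dim_gt1 hx0).
have real_max := second_singular_value_real hA hx0 s_eig.
by split; [apply: imaginary_max_of_real_max|].
Qed.
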